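(* Under the hypotheses and notation of the main entropy theorem (symmetric parameters $q_0=q_1=\sqrt{1-Q}$, $W=(I_{A_1}\otimes V)\mathbf{Rw}$ with the stated norm conditions on $\ket{e_i},\ket{f_i}$), let $\ket{\Phi^\pm}=\tfrac1{\sqrt2}(\ket{00}\pm\ket{11})$, $\tau=W\ket{\Phi^+}\bra{\Phi^+}W^*$, $\mu=W\ket{\Phi^-}\bra{\Phi^-}W^*$, and $\sigma=\tfrac12W(\ket{00}\bra{00}+\ket{11}\bra{11})W^*$. Then \[ \sigma_{A_1^ZE}=\tfrac12\tau_{A_1^ZE}+\tfrac12\mu_{A_1^ZE} \qquad\text{and}\qquad \tfrac12\big\|\tau_{A_1^ZE}-\mu_{A_1^ZE}\big\|_1\le 4Q(1-Q). \]
   Context: Setting: $\mathcal{H}_{A_1}=\mathcal{H}_{A_2}=\mathbb{C}^2$, finite-dimensional $\mathcal{H}_E$ with orthonormal $\ket0_E,\ket1_E$; $\eta\in\mathbb{C}$, $|\eta|\le1$, $\ket{e}=\eta\ket0_E+\sqrt{1-|\eta|^2}\ket1_E$, $\ket{f}=-\overline\eta\ket0_E+\sqrt{1-|\eta|^2}\ket1_E$; $\mathbf{Rw}\ket{00}=\sqrt{1-Q}\ket{000}+\sqrt{Q}\ket{1}\ket0\ket f$, $\mathbf{Rw}\ket{11}=\sqrt Q\ket0\ket1\ket e+\sqrt{1-Q}\ket{110}$ (order $A_1A_2E$); $V$ unitary on $\mathcal{H}_{A_2}\otimes\mathcal{H}_E$ with $V\ket0\ket0_E=\ket0\ket{e_0}+\ket1\ket{e_1}$,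 $V\ket1\ket0_E=\ket0\ket{e_2}+\ket1\ket{e_3}$, $V\ket0\ket f=\ket0\ket{f_0}+\ket1\ket{f_1}$, $V\ket1\ket e=\ket0\ket{f_2}+\ket1\ket{f_3}$, and assumed $\|e_0\|^2=\|e_3\|^2=\|f_0\|^2=\|f_3\|^2=1-Q$, $\|e_1\|^2=\|e_2\|^2=\|f_1\|^2=\|f_2\|^2=Q$. For a state $\rho$ on $A_1A_2E$, $\rho_{A_1^ZE}=\sum_{a}\ket a\bra a\otimes\mathrm{tr}_{A_1A_2}[(\ket a\bra a_{A_1}\otimes I)\rho]$. $\|\cdot\|_1$ is the trace norm. *)

From HB Require Import structures.
From mathcomp Require Import all_boot all_order all_algebra all_field.
Set Implicit Arguments. Unset Strict Implicit. Unset Printing Implicit Defensive.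
Import Order.TTheory GRing.Theory Num.Theory.
Local Open Scope ring_scope.

Definition adj (m n : nat) (A : 'M[algC]_(m, n)) : 'M[algC]_(n, m) :=
  (map_mx Num.conj A)^T.

(* Kronecker (tensor) product; the index of (i1,i2) in 'I_(m1*m2) is
   mxvec_index i1 i2 (first factor = most significant). *)
Definition kron (m1 n1 m2 n2 : nat) (A : 'M[algC]_(m1, n1)) (B : 'M[algC]_(m2, n2))
  : 'M[algC]_(m1 * m2, n1 * n2) :=
  \matrix_(k, l)
    match mxvec_indexP k, mxvec_indexP l with
    | isMxvecIndex i1 i2, isMxvecIndex j1 j2 => A i1 j1 * B i2 j2
    end.

Definition ket0 : 'cV[algC]_2 := delta_mx ord0 0.
Definition ket1 : 'cV[algC]_2 := delta_mx ord_max 0.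
Definition ket (a : 'I_2) : 'cV[algC]_2 := delta_mx a 0.

Definition inner (n : nat) (u v : 'cV[algC]_n) : algC := (adj u *m v) 0 0.
Definition sqnorm (n : nat) (v : 'cV[algC]_n) : algC := inner v v.

(* partial trace over A1 A2 of an operator on A1 (x) (A2 (x) E), dim E = d *)
Definition ptrA1A2 (d : nat) (M : 'M[algC]_(2 * (2 * d))) : 'M[algC]_d :=
  \matrix_(i, j) \sum_(a < 2) \sum_(b < 2)
      M (mxvec_index a (mxvec_index b i)) (mxvec_index a (mxvec_index b j)).

(* rho_{A1^Z E} = sum_a |a><a| (x) tr_{A1A2}[(|a><a|_{A1} (x) I) rho] *)
Definition rhoZE (d : nat) (rho : 'M[algC]_(2 * (2 * d))) : 'M[algC]_(2 * d) :=
  \sum_(a < 2) kron (ket a *m adj (ket a))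
                    (ptrA1A2 (kron (ket a *m adj (ket a)) (1%:M : 'M[algC]_(2 * d)) *m rho)).

(* trace norm: sum of the singular values, i.e. of the square roots of the
   eigenvalues (with multiplicity) of X^* X *)
Definition tnorm (n : nat) (X : 'M[algC]_n) : algC :=
  \sum_(z <- sval (closed_field_poly_normal (char_poly (adj X *m X)))) sqrtC z.

(* Write x = W|00> and y = W|11>.  Polarization gives
   |Phi+><Phi+| + |Phi-><Phi-| = |00><00| + |11><11|, hence sigma = (tau + mu)/2, and
   W (|Phi+><Phi+| - |Phi-><Phi-|) W^* = x y^* + y x^*.  Expanding x and y along the
   basis |a>|b> of A1 A2, dephasing A1 and tracing out A2 keep only the diagonal terms,
   so tau_ZE - mu_ZE = sum_(a,b) (u_ab v_ab^* + v_ab u_ab^* ) with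
   ||u_ab|| ||v_ab|| = Q (1 - Q) by the norm hypotheses.  The trace norm of a Hermitian
   X equals |tr (Z X)| for a unitary Z, and |tr (Z u v^* )| <= ||u|| ||v|| by
   Cauchy-Schwarz, so the eight rank-one terms give ||tau_ZE - mu_ZE||_1 <= 8 Q (1 - Q). *)

From HB Require Import structures.
From mathcomp Require Import all_boot all_order all_algebra all_field.
From mathcomp Require Import ring.

Set Implicit Arguments.
Unset Strict Implicit.
Unset Printing Implicit Defensive.

Import Order.TTheory GRing.Theory Num.Theory.
Local Open Scope ring_scope.

Lemma big_ord2 (T : nmodType) (F : 'I_2 -> T) : \sum_(i < 2) F i = F ord0 + F ord_max.
Proof. by rewrite big_ord_recl big_ord1; congr (_ + F _); exact: val_inj. Qed.

Lemma ord2_cases (i : 'I_2) : i = ord0 \/ i = ord_max.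
Proof. by case: i => [[|[|//]] ?]; [left|right]; apply: val_inj. Qed.

Lemma adjM m n p (A : 'M[algC]_(m, n)) (B : 'M[algC]_(n, p)) :
  adj (A *m B) = adj B *m adj A.
Proof. by rewrite /adj map_mxM trmx_mul. Qed.

Lemma adjK m n (A : 'M[algC]_(m, n)) : adj (adj A) = A.
Proof. by apply/matrixP => i j; rewrite !mxE conjCK. Qed.

Fact adj_is_zmod_morphism m n : zmod_morphism (@adj m n).
Proof. by move=> A B; apply/matrixP => i j; rewrite !mxE rmorphB. Qed.

HB.instance Definition _ m n :=
  GRing.isZmodMorphism.Build _ _ (@adj m n) (@adj_is_zmod_morphism m n).

Lemma adjZ m n (a : algC) (A : 'M[algC]_(m, n)) : adj (a *: A) = a^* *: adj A.
Proof. by apply/matrixP => i j; rewrite !mxE rmorphM. Qed.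

Lemma adj_diag n (e : 'rV[algC]_n) : adj (diag_mx e) = diag_mx (map_mx Num.conj e).
Proof. by rewrite /adj map_diag_mx tr_diag_mx. Qed.

Lemma hermitian_adj n (X : 'M[algC]_n) : adj X = X -> X \is hermsymmx.
Proof. by move=> hX; rewrite qualifE /= expr0 scale1r -map_trmx -/(adj X) hX. Qed.

Section BellStates.
Variables (m n : nat) (x y : 'M[algC]_(m, n)).

Let bell_outer (z : 'M[algC]_(m, n)) :
  ((sqrtC 2)^-1 *: z) *m adj ((sqrtC 2)^-1 *: z) = 2^-1 *: (z *m adj z).
Proof.
have r2 : ((sqrtC 2)^-1 : algC) \is Num.real by apply: ger0_real; rewrite invr_ge0 sqrtC_ge0.
by rewrite adjZ -scalemxAl -scalemxAr scalerA (conj_Creal r2) -invfM -expr2 sqrtCK.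
Qed.

Lemma bell_outerD :
  ((sqrtC 2)^-1 *: (x + y)) *m adj ((sqrtC 2)^-1 *: (x + y)) +
  ((sqrtC 2)^-1 *: (x - y)) *m adj ((sqrtC 2)^-1 *: (x - y)) =
  x *m adj x + y *m adj y.
Proof.
rewrite !bell_outer !raddfB !raddfD /= !(mulmxBl, mulmxDl, mulmxBr, mulmxDr).
move: (x *m adj x) (x *m adj y) (y *m adj x) (y *m adj y) => A B C D.
by apply/matrixP => i j; rewrite !mxE; field.
Qed.

Lemma bell_outerB :
  ((sqrtC 2)^-1 *: (x + y)) *m adj ((sqrtC 2)^-1 *: (x + y)) -
  ((sqrtC 2)^-1 *: (x - y)) *m adj ((sqrtC 2)^-1 *: (x - y)) =
  x *m adj y + y *m adj x.
Proof.
rewrite !bell_outer !raddfB !raddfD /= !(mulmxBl, mulmxDl, mulmxBr, mulmxDr).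
move: (x *m adj x) (x *m adj y) (y *m adj x) (y *m adj y) => A B C D.
by apply/matrixP => i j; rewrite !mxE; field.
Qed.

End BellStates.

Definition unvec m n (k : 'I_(m * n)) : 'I_m * 'I_n :=
  enum_val (cast_ord (esym (mxvec_cast m n)) k).

Lemma unvecK m n (i : 'I_m) (j : 'I_n) : unvec (mxvec_index i j) = (i, j).
Proof. by rewrite /unvec /mxvec_index cast_ordK enum_rankK. Qed.

Lemma kron_unvecE m1 n1 m2 n2 (A : 'M[algC]_(m1, n1)) (B : 'M[algC]_(m2, n2)) k l :
  kron A B k l = A (unvec k).1 (unvec l).1 * B (unvec k).2 (unvec l).2.
Proof.
rewrite /kron mxE; case: (mxvec_indexP k) => i1 i2; case: (mxvec_indexP l) => j1 j2.
by rewrite !unvecK.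
Qed.

Lemma kronE m1 n1 m2 n2 (A : 'M[algC]_(m1, n1)) (B : 'M[algC]_(m2, n2)) i1 i2 j1 j2 :
  kron A B (mxvec_index i1 i2) (mxvec_index j1 j2) = A i1 j1 * B i2 j2.
Proof. by rewrite kron_unvecE !unvecK. Qed.

Lemma sum_mxvec_index m n (F : 'I_(m * n) -> algC) :
  \sum_k F k = \sum_i \sum_j F (mxvec_index i j).
Proof.
rewrite pair_big /= (reindex (fun p : 'I_m * 'I_n => mxvec_index p.1 p.2)) //=.
case: (curry_mxvec_bij m n) => g h1 h2.
by exists g => [[i j] _|k _]; [exact: (h1 (i, j)) | rewrite /= -[RHS](h2 k) //; case: (g k)].
Qed.

Lemma kron_mul m1 n1 p1 m2 n2 p2 (A : 'M[algC]_(m1, n1)) (B : 'M[algC]_(m2, n2))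
  (C : 'M[algC]_(n1, p1)) (D : 'M[algC]_(n2, p2)) :
  kron A B *m kron C D = kron (A *m C) (B *m D).
Proof.
apply/matrixP => k l; case/mxvec_indexP: k => i1 i2; case/mxvec_indexP: l => j1 j2.
rewrite kronE !mxE sum_mxvec_index big_distrl; apply: eq_bigr => a _.
rewrite big_distrr; apply: eq_bigr => b _ /=.
by rewrite !kron_unvecE !unvecK /= mulrACA.
Qed.

Lemma adj_kron m1 n1 m2 n2 (A : 'M[algC]_(m1, n1)) (B : 'M[algC]_(m2, n2)) :
  adj (kron A B) = kron (adj A) (adj B).
Proof.
apply/matrixP => k l; case/mxvec_indexP: k => i1 i2; case/mxvec_indexP: l => j1 j2.
by rewrite kronE /adj mxE [map_mx _ _ _ _]mxE kron_unvecE !unvecK /= !mxE rmorphM.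
Qed.

Section KronLinear.
Variables (m1 n1 m2 n2 : nat) (A : 'M[algC]_(m1, n1)).

Fact kron_is_linear : linear (@kron m1 n1 m2 n2 A).
Proof.
move=> a B C; apply/matrixP => k l.
by rewrite [RHS]mxE [in RHS]mxE !kron_unvecE !mxE mulrDr mulrCA.
Qed.

HB.instance Definition _ :=
  GRing.isLinear.Build _ _ _ _ (@kron m1 n1 m2 n2 A) kron_is_linear.

End KronLinear.

Lemma ket_mul_adj (a b : 'I_2) : ket a *m adj (ket b) = delta_mx a b.
Proof.
apply/matrixP => i j; rewrite !mxE big_ord1 !mxE.
by rewrite !andbT rmorph_nat -natrM; case: (i == a); case: (j == b).
Qed.

Lemma mxtrace_delta n (a b : 'I_n) : \tr (delta_mx a b : 'M[algC]_n) = (a == b)%:R.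
Proof.
rewrite /mxtrace (bigD1 a) //= big1 => [|i ni]; last by rewrite mxE (negPf ni).
by rewrite mxE eqxx addr0 /= eq_sym.
Qed.

Section Dephasing.
Variable d : nat.

Fact ptrA1A2_is_linear : linear (@ptrA1A2 d).
Proof.
move=> x M N; apply/matrixP => i j; rewrite /ptrA1A2 !mxE mulr_sumr -big_split.
apply: eq_bigr => a _; rewrite mulr_sumr -big_split.
by apply: eq_bigr => b _; rewrite !mxE.
Qed.

HB.instance Definition _ :=
  GRing.isLinear.Build _ _ _ _ (@ptrA1A2 d) ptrA1A2_is_linear.

Fact rhoZE_is_linear : linear (@rhoZE d).
Proof.
move=> x M N; rewrite /rhoZE scaler_sumr -big_split; apply: eq_bigr => a _.
by rewrite mulmxDr -scalemxAr !linearP.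
Qed.

HB.instance Definition _ :=
  GRing.isLinear.Build _ _ _ _ (@rhoZE d) rhoZE_is_linear.

Lemma ptrA1A2_kron (A B : 'M[algC]_2) (C : 'M[algC]_d) :
  ptrA1A2 (kron A (kron B C)) = (\tr A * \tr B) *: C.
Proof.
apply/matrixP => i j; rewrite /ptrA1A2 mxE [RHS]mxE.
rewrite /mxtrace !mulr_suml; apply: eq_bigr => a _.
rewrite mulr_sumr mulr_suml; apply: eq_bigr => b _.
by rewrite !kronE mulrA.
Qed.

Lemma rhoZE_kron_delta (a a' b b' : 'I_2) (C : 'M[algC]_d) :
  rhoZE (kron (delta_mx a a') (kron (delta_mx b b') C)) =
  ((a == a')%:R * (b == b')%:R) *: kron (delta_mx a a) C.
Proof.
rewrite /rhoZE (bigD1 a) //= big1 => [|x nx].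
  rewrite addr0 ket_mul_adj kron_mul mul1mx ptrA1A2_kron mul_delta_mx.
  by rewrite !mxtrace_delta linearZ.
rewrite ket_mul_adj kron_mul mul1mx ptrA1A2_kron mul_delta_mx_cond mxtrace_delta.
by rewrite (negPf nx) mulr0n mxtrace0 mul0r scale0r linear0.
Qed.

Definition tensor_ket (c : 'I_2 -> 'I_2 -> 'cV[algC]_d) : 'cV[algC]_(2 * (2 * d)) :=
  \sum_a \sum_b kron (ket a) (kron (ket b) (c a b)).

Lemma rhoZE_tensor_ket_outer (c g : 'I_2 -> 'I_2 -> 'cV[algC]_d) :
  rhoZE (tensor_ket c *m adj (tensor_ket g)) =
  \sum_a \sum_b kron (ket a) (c a b) *m adj (kron (ket a) (g a b)).
Proof.
have outerE a b a' b' (u v : 'cV[algC]_d) :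
    rhoZE (kron (ket a) (kron (ket b) u) *m adj (kron (ket a') (kron (ket b') v))) =
    ((a == a')%:R * (b == b')%:R) *: (kron (ket a) u *m adj (kron (ket a) v)).
  by rewrite !adj_kron !kron_mul !ket_mul_adj rhoZE_kron_delta.
rewrite /tensor_ket mulmx_suml linear_sum; apply: eq_bigr => a _.
rewrite mulmx_suml linear_sum; apply: eq_bigr => b _.
rewrite raddf_sum mulmx_sumr linear_sum (bigD1 a) //= [X in _ + X]big1 => [|a' na].
  rewrite addr0 raddf_sum mulmx_sumr linear_sum (bigD1 b) //= [X in _ + X]big1 => [|b' nb].
    by rewrite addr0 outerE !eqxx mulr1 scale1r.
  by rewrite outerE eq_sym (negPf nb) mulr0 scale0r.
rewrite raddf_sum mulmx_sumr linear_sum big1 // => b' _.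
by rewrite /= outerE eq_sym (negPf na) mul0r scale0r.
Qed.

End Dephasing.

Lemma char_poly_similar n (P M : 'M[algC]_n) : P \in unitmx ->
  char_poly (invmx P *m M *m P) = char_poly M.
Proof.
move=> Pu; rewrite /char_poly /char_poly_mx.
set P' := map_mx polyC P.
have P'u : P' \in unitmx by rewrite map_unitmx.
rewrite !map_mxM map_invmx -/P'.
have XE : (scalar_mx 'X : 'M_n) = invmx P' *m 'X%:M *m P'.
  by rewrite -mulmxA -scalar_mxC mulmxA mulVmx // mul1mx.
rewrite [X in \det (X - _)]XE -mulmxBl -mulmxBr !det_mulmx mulrC mulrA -det_mulmx.
by rewrite mulmxV // det1 mul1r.
Qed.

Lemma char_poly_diag n (e : 'rV[algC]_n) :
  char_poly (diag_mx e) = \prod_(i < n) ('X - (e 0 i)%:P).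
Proof.
rewrite char_poly_trig ?diag_mx_is_trig //.
by apply: eq_bigr => i _; rewrite mxE eqxx mulr1n.
Qed.

Section HermitianTraceNorm.
Variables (n : nat) (X : 'M[algC]_n).
Hypothesis hermX : adj X = X.

Let P := spectralmx X.
Let e := spectral_diag X.

Let P_unitary : P \is unitarymx. Proof. exact: spectral_unitarymx. Qed.
Let P_unit : P \in unitmx. Proof. exact: spectral_unit. Qed.
Let invP : invmx P = adj P. Proof. by rewrite invmx_unitary // /adj map_trmx. Qed.

Let XE : X = invmx P *m diag_mx e *m P.
Proof.
apply/orthomx_spectralP/hermitian_normalmx.
exact: hermitian_adj.
Qed.

Let e_real i : e 0 i \is Num.real.
Proof.
by have /mxOverP := hermitian_spectral_diag_real (hermitian_adj hermX); apply.
Qed.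

Lemma tnorm_hermitian : tnorm X = \sum_i `|e 0 i|.
Proof.
have cpE : char_poly (adj X *m X) = \prod_(i < n) ('X - (e 0 i ^+ 2)%:P).
  rewrite hermX {1 2}XE !mulmxA mulmxK // -(mulmxA _ (diag_mx e) (diag_mx e)).
  rewrite mulmx_diag char_poly_similar // char_poly_diag.
  by apply: eq_bigr => i _; rewrite !mxE expr2.
rewrite /tnorm; case: closed_field_poly_normal => r /= Hr.
rewrite cpE (monicP (monic_prod_XsubC _ _ _)) scale1r in Hr.
have r_perm : perm_eq r [seq e 0 i ^+ 2 | i <- enum 'I_n].
  by apply: prod_XsubC_eq; rewrite -Hr big_map enumT.
rewrite (perm_big _ r_perm) big_map enumT; apply: eq_bigr => i _.
by rewrite -real_normK ?e_real // sqrCK.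
Qed.

(* [Z] multiplies each eigenvector of [X] by the sign of its eigenvalue. *)
Lemma tnorm_hermitian_unitary_trace :
  exists2 Z : 'M[algC]_n, adj Z *m Z = 1%:M & tnorm X = `|\tr (Z *m X)|.
Proof.
pose s i : algC := if 0 <= e 0 i then 1 else -1.
pose S := diag_mx (\row_i s i).
have sE i : s i * e 0 i = `|e 0 i|.
  rewrite /s; case: ifP => h; first by rewrite mul1r ger0_norm.
  by rewrite mulN1r ler0_norm // ltW // (real_ltNge (e_real i)) ?h.
have S_adj : adj S = S.
  by rewrite adj_diag; congr diag_mx; apply/rowP => i; rewrite !mxE /s;
    case: ifP; rewrite ?rmorphN rmorph1.
have SS : S *m S = 1%:M.
  by apply/matrixP => i j; rewrite mulmx_diag !mxE /s; case: ifP;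
    rewrite ?mulr1 ?mulrNN ?mulr1.
exists (invmx P *m S *m P).
  rewrite !adjM S_adj invP adjK -invP.
  by rewrite !mulmxA mulmxK // -(mulmxA _ S S) SS mulmx1 mulVmx.
rewrite tnorm_hermitian {1}XE !mulmxA mulmxK // mxtrace_mulC !mulmxA mulmxV //.
rewrite mul1mx mulmx_diag mxtrace_diag.
rewrite [in RHS](eq_bigr (fun i => `|e 0 i|)) => [|i _]; last by rewrite !mxE sE.
by rewrite ger0_norm // sumr_ge0.
Qed.

End HermitianTraceNorm.

Lemma inner_dotmx n (u v : 'cV[algC]_n) : inner u v = dotmx v^T u^T.
Proof. by rewrite /inner dotmxE !mxE; apply: eq_bigr => k _; rewrite !mxE mulrC. Qed.

Lemma sqnorm_ge0 n (u : 'cV[algC]_n) : 0 <= sqnorm u.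
Proof. by rewrite /sqnorm inner_dotmx dnorm_ge0. Qed.

Lemma sqnormE n (u : 'cV[algC]_n) : sqnorm u = \sum_k (u k 0)^* * u k 0.
Proof. by rewrite /sqnorm /inner mxE; apply: eq_bigr => k _; rewrite !mxE. Qed.

Lemma sqnormZ n (a : algC) (u : 'cV[algC]_n) : sqnorm (a *: u) = a^* * a * sqnorm u.
Proof. by rewrite /sqnorm /inner adjZ -scalemxAl -scalemxAr !mxE mulrA. Qed.

Lemma sqnorm_sqrtCZ n (x : algC) (u : 'cV[algC]_n) :
  0 <= x -> sqnorm (sqrtC x *: u) = x * sqnorm u.
Proof.
by move=> x_ge0; rewrite sqnormZ conj_Creal ?ger0_real ?sqrtC_ge0 // -expr2 sqrtCK.
Qed.

Lemma sqnorm_kron_ket d (a : 'I_2) (u : 'cV[algC]_d) : sqnorm (kron (ket a) u) = sqnorm u.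
Proof.
have entryE i j : kron (ket a) u (mxvec_index i j) 0 = (i == a)%:R * u j 0.
  by rewrite kron_unvecE unvecK /=; case: unvec => x y /=; rewrite !ord1 !mxE andbT.
rewrite !sqnormE sum_mxvec_index (bigD1 a) //= [X in _ + X]big1 => [|i ni].
  by rewrite addr0; apply: eq_bigr => j _; rewrite !entryE eqxx mul1r.
by rewrite big1 // => j _; rewrite !entryE (negPf ni) mul0r mulr0.
Qed.

Lemma inner_CauchySchwarz n (u v : 'cV[algC]_n) :
  `|inner u v| <= sqrtC (sqnorm u) * sqrtC (sqnorm v).
Proof.
rewrite /sqnorm !inner_dotmx mulrC.
exact: (CauchySchwarz_sqrt (@dotmx _ n) v^T u^T).1.
Qed.

Lemma sqnorm_isometry m n (Z : 'M[algC]_(m, n)) (u : 'cV[algC]_n) :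
  adj Z *m Z = 1%:M -> sqnorm (Z *m u) = sqnorm u.
Proof. by move=> hZ; rewrite /sqnorm /inner adjM -mulmxA (mulmxA (adj Z)) hZ mul1mx. Qed.

Lemma normr_tr_unitary_outer_le n (Z : 'M[algC]_n) (u v : 'cV[algC]_n) :
  adj Z *m Z = 1%:M ->
  `|\tr (Z *m (u *m adj v))| <= sqrtC (sqnorm u) * sqrtC (sqnorm v).
Proof.
move=> hZ; rewrite mulmxA mxtrace_mulC trace_mx11 -(sqnorm_isometry u hZ) mulrC.
exact: inner_CauchySchwarz.
Qed.

Lemma tnorm_symmetrized_outer_le n (I : finType) (u v : I -> 'cV[algC]_n) :
  tnorm (\sum_i (u i *m adj (v i) + v i *m adj (u i))) <=
  2%:R * \sum_i sqrtC (sqnorm (u i)) * sqrtC (sqnorm (v i)).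
Proof.
set X := \sum_i _.
have hermX : adj X = X.
  by rewrite raddf_sum; apply: eq_bigr => i _; rewrite raddfD /= !adjM !adjK addrC.
have [Z hZ ->] := tnorm_hermitian_unitary_trace hermX.
rewrite mulr_natl mulrS mulr1n -big_split /= mulmx_sumr raddf_sum /=.
apply: (le_trans (ler_norm_sum _ _ _)); apply: ler_sum => i _.
rewrite mulmxDr raddfD /=; apply: (le_trans (ler_normD _ _)).
rewrite [Y in _ <= _ + Y]mulrC.
by apply: lerD; exact: normr_tr_unitary_outer_le.
Qed.

Lemma tnorm_symmetrized_outer_const_le n (I : finType) (u v : I -> 'cV[algC]_n) t :
  0 <= t -> (forall i, sqnorm (u i) * sqnorm (v i) = t ^+ 2) ->
  tnorm (\sum_i (u i *m adj (v i) + v i *m adj (u i))) <= (2 * #|I|)%:R * t.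
Proof.
move=> t_ge0 uvE; apply: le_trans (tnorm_symmetrized_outer_le u v) _.
under eq_bigr => i _ do rewrite -sqrtCM ?nnegrE ?sqnorm_ge0 // uvE sqrCK //.
by rewrite sumr_const -[t *+ _]mulr_natl natrM mulrA.
Qed.

Theorem mainTheorem6
  (d : nat) (k0E k1E : 'cV[algC]_d)
  (horth : [/\ sqnorm k0E = 1, sqnorm k1E = 1 & inner k0E k1E = 0])
  (eta Q : algC) (heta : `|eta| <= 1) (hQ0 : 0 <= Q) (hQ1 : Q <= 1)
  (Rw : 'M[algC]_(2 * (2 * d), 2 * 2))
  (V : 'M[algC]_(2 * d))
  (e0 e1 e2 e3 f0 f1 f2 f3 : 'cV[algC]_d) :
  let ke := eta *: k0E + sqrtC (1 - `|eta| ^+ 2) *: k1E in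
  let kf := - (Num.conj eta) *: k0E + sqrtC (1 - `|eta| ^+ 2) *: k1E in
  Rw *m kron ket0 ket0 =
    sqrtC (1 - Q) *: kron ket0 (kron ket0 k0E) + sqrtC Q *: kron ket1 (kron ket0 kf) ->
  Rw *m kron ket1 ket1 =
    sqrtC Q *: kron ket0 (kron ket1 ke) + sqrtC (1 - Q) *: kron ket1 (kron ket1 k0E) ->
  adj V *m V = 1%:M ->
  V *m kron ket0 k0E = kron ket0 e0 + kron ket1 e1 ->
  V *m kron ket1 k0E = kron ket0 e2 + kron ket1 e3 ->
  V *m kron ket0 kf = kron ket0 f0 + kron ket1 f1 ->
  V *m kron ket1 ke = kron ket0 f2 + kron ket1 f3 ->
  [/\ sqnorm e0 = 1 - Q, sqnorm e3 = 1 - Q, sqnorm f0 = 1 - Q & sqnorm f3 = 1 - Q] ->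
  [/\ sqnorm e1 = Q, sqnorm e2 = Q, sqnorm f1 = Q & sqnorm f2 = Q] ->
  let W := kron (1%:M : 'M[algC]_2) V *m Rw in
  let phip := (sqrtC 2)^-1 *: (kron ket0 ket0 + kron ket1 ket1) in
  let phim := (sqrtC 2)^-1 *: (kron ket0 ket0 - kron ket1 ket1) in
  let tau := W *m (phip *m adj phip) *m adj W in
  let mu := W *m (phim *m adj phim) *m adj W in
  let sigma := 2^-1 *: (W *m (kron ket0 ket0 *m adj (kron ket0 ket0)
                               + kron ket1 ket1 *m adj (kron ket1 ket1)) *m adj W) in
  rhoZE sigma = 2^-1 *: rhoZE tau + 2^-1 *: rhoZE mu /\
  2^-1 * tnorm (rhoZE tau - rhoZE mu) <= 4 * Q * (1 - Q).
Proof.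
move=> ke kf W00 W11 _ Ve0 Ve1 Vf0 Ve [n_e0 n_e3 n_f0 n_f3] [n_e1 n_e2 n_f1 n_f2].
move=> W phip phim tau mu sigma.
pose c (a b : 'I_2) := if a == ord0
  then sqrtC (1 - Q) *: (if b == ord0 then e0 else e1)
  else sqrtC Q *: (if b == ord0 then f0 else f1).
pose g (a b : 'I_2) := if a == ord0
  then sqrtC Q *: (if b == ord0 then f2 else f3)
  else sqrtC (1 - Q) *: (if b == ord0 then e2 else e3).
have Wx : W *m kron ket0 ket0 = tensor_ket c.
  rewrite /W -mulmxA W00 mulmxDr -!scalemxAr !kron_mul !mul1mx Ve0 Vf0.
  by rewrite /tensor_ket !big_ord2 /c /= !linearD !linearZ.
have Wy : W *m kron ket1 ket1 = tensor_ket g.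
  rewrite /W -mulmxA W11 mulmxDr -!scalemxAr !kron_mul !mul1mx Ve Ve1.
  by rewrite /tensor_ket !big_ord2 /g /= !linearD !linearZ addrC.
have conjW (A B : 'cV[algC]_(2 * 2)) :
    W *m (A *m adj B) *m adj W = (W *m A) *m adj (W *m B).
  by rewrite adjM !mulmxA.
split.
  suff -> : sigma = 2^-1 *: tau + 2^-1 *: mu by rewrite linearD !linearZ.
  by rewrite /sigma /tau /mu -scalerDr -mulmxDl -mulmxDr bell_outerD.
have -> : rhoZE tau - rhoZE mu =
    \sum_(ab : 'I_2 * 'I_2)
      (kron (ket ab.1) (c ab.1 ab.2) *m adj (kron (ket ab.1) (g ab.1 ab.2)) +
       kron (ket ab.1) (g ab.1 ab.2) *m adj (kron (ket ab.1) (c ab.1 ab.2))).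
  rewrite -linearB /tau /mu -mulmxBl -mulmxBr bell_outerB mulmxDr mulmxDl !conjW Wx Wy.
  by rewrite linearD /= !rhoZE_tensor_ket_outer !pair_big -big_split.
have [Q_ge0 Q'_ge0] : 0 <= Q /\ 0 <= 1 - Q by rewrite subr_ge0.
have normsE (ab : 'I_2 * 'I_2) :
    sqnorm (kron (ket ab.1) (c ab.1 ab.2)) * sqnorm (kron (ket ab.1) (g ab.1 ab.2)) =
    (Q * (1 - Q)) ^+ 2.
  case: ab => a b; rewrite !sqnorm_kron_ket /c /g /=.
  by case: (ord2_cases a) => ->; case: (ord2_cases b) => -> /=;
    rewrite !sqnorm_sqrtCZ // ?n_e0 ?n_e1 ?n_e2 ?n_e3 ?n_f0 ?n_f1 ?n_f2 ?n_f3; ring.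
have := tnorm_symmetrized_outer_const_le (mulr_ge0 Q_ge0 Q'_ge0) normsE.
rewrite card_prod card_ord => tnorm_le.
apply: le_trans (ler_wpM2l _ tnorm_le) _; first by rewrite invr_ge0 ler0n.
by rewrite le_eqVlt; apply/orP; left; apply/eqP; field.
Qed.
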